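(* Let $G$ be a graph with vertices labelled $1,\dots,n$, let $A$ be an $\mathrm{Aut}\,G$-invariant normal subgroup of $\mathbb{Z}_2^{*V(G)}$, and let $\Gamma=\mathbb{Z}_2^{*V(G)}/A$. Then there exists a skew graph category $\mathscr{C}$ such that $\mathscr{C}^G$ is the representation category of the quantum group $\mathbb{G}=\hat\Gamma\rtimes\mathrm{Aut}\,G$, i.e. $\mathscr{C}^G(k,l)=\mathrm{Mor}(u^{\otimes k},u^{\otimes l})$ for all $k,l\in\mathbb{N}_0$, where $u$ is the fundamental representation of $\mathbb{G}$.
   Context: Graphs are finite, undirected, without multiple edges, loops allowed, up to isomorphism; $N_k$ is the edgeless graph on $k$ vertices; graph homomorphisms map edges (including loops) to edges. $\mathbb{Z}_2^{*V}$ is the group generated by the set $V$ subject to $v^2=e$; automorphisms of $G$ act on $\mathbb{Z}_2^{*V(G)}$ by permuting generators. A vertex overlap of graphs $K,H$ is a subset $f\subset V(K)\times V(H)$ in which each vertex occurs at most once; $K\cup_fH$ is the quotient of $K\sqcup H$ identifying $v$ with $w$ for $(v,w)\in f$, with induced maps $f_K,f_H$. A bilabelled graph is $(K,\mathbf{a},\mathbf{b})$ with $\mathbf{a}\in V(K)^k$, $\mathbf{b}\in V(K)^l$, up to isomorphism preserving tuples; $\mathscr{C}(k,l)$ those with $k$ inputs, $l$ outputs. A skew graph category is a set of bilabelled graphs containing $(N_0,\emptyset,\emptyset)$, $(M,(v),(v))$, $(M,\emptyset,(v,v))$ ($M$ the one-vertex loopless graph with vertex $v$), closed under all $f$-unions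 $(K,\mathbf{a},\mathbf{b})\cup_f(H,\mathbf{c},\mathbf{d})=(K\cup_fH,f_K(\mathbf{a})f_H(\mathbf{c}),f_K(\mathbf{b})f_H(\mathbf{d}))$, under involution $(K,\mathbf{a},\mathbf{b})\mapsto(K,\mathbf{b},\mathbf{a})$, and under compositions $(H,\mathbf{c},\mathbf{d})\cdot(K,\mathbf{a},\mathbf{b})=(H\cdot K,\mathbf{a},\mathbf{d})$ ($H\cdot K$ the quotient of $K\sqcup H$ identifying $b_i$ with $c_i$) whenever $\mathbf{b}$ and $\mathbf{c}$ have the same pattern of equal entries. $\hat T^G_{(K,\mathbf{a},\mathbf{b})}\colon(\mathbb{C}^n)^{\otimes k}\to(\mathbb{C}^n)^{\otimes l}$ has $(\mathbf{j},\mathbf{i})$-entry $\#\{\phi\colon K\to G\text{ injective homomorphism}\mid\phi(\mathbf{a})=\mathbf{i},\phi(\mathbf{b})=\mathbf{j}\}$ and $\mathscr{C}^G(k,l)=\mathrm{span}\{\hat T^G_{\mathbf{K}}\mid\mathbf{K}\in\mathscr{C}(k,l)\}$. Quantum groups: for an orthogonal compact matrix quantum group $(O(\mathbb{G}),u)$, $\mathrm{Mor}(u^{\otimes k},u^{\otimes l})=\{T\colon(\mathbb{C}^n)^{\otimes k}\to(\mathbb{C}^n)^{\otimes l}\mid Tu^{\otimes k}=u^{\otimes l}T\}$. A permutation group $H\subset S_n$ is the quantum group $(O(H),v)$ with $v_{ij}(\sigma)=\delta_{i\sigma(j)}$; $\mathrm{Aut}\,G\subset S_n$ via the labelling. For $\Gamma$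 a quotient of $\mathbb{Z}_2^{*n}$ by an $H$-invariant normal subgroup, with $\gamma_i\in\mathbb{C}\Gamma$ the images of the generators, $\hat\Gamma\rtimes H$ is $(\mathbb{C}\Gamma\otimes O(H),u)$ with $u_{ij}=\gamma_i\otimes v_{ij}$. *)

From HB Require Import structures.
From mathcomp Require Import all_boot all_order all_algebra.
From mathcomp Require Import fingroup perm.
From mathcomp Require Import complex reals.
Set Implicit Arguments. Unset Strict Implicit. Unset Printing Implicit Defensive.
Import Order.TTheory GRing.Theory Num.Theory.
Local Open Scope ring_scope.

(* A concrete bilabelled graph: vertices 'I_bg_n, adjacency relation (loops
   allowed, symmetry imposed in [skew_graph_category]), input tuple bg_in
   (the a), output tuple bg_out (the b). *)
Record bgraph := BGraph {
  bg_n : nat;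
  bg_adj : rel 'I_bg_n;
  bg_in : seq 'I_bg_n;
  bg_out : seq 'I_bg_n }.

Definition bg_iso (K L : bgraph) : Prop :=
  exists h : 'I_(bg_n K) -> 'I_(bg_n L),
    bijective h /\ (forall x y, bg_adj (h x) (h y) = bg_adj x y) /\
    map h (bg_in K) = bg_in L /\ map h (bg_out K) = bg_out L.

Definition rel0 (m : nat) : rel 'I_m := fun _ _ => false.

Definition bgN0 : bgraph := @BGraph 0 (@rel0 0) [::] [::].
Definition bgM1 : bgraph := @BGraph 1 (@rel0 1) [:: ord0] [:: ord0].
Definition bgM2 : bgraph := @BGraph 1 (@rel0 1) [::] [:: ord0; ord0].

Definition bg_swap (K : bgraph) : bgraph :=
  @BGraph (bg_n K) (@bg_adj K) (bg_out K) (bg_in K).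

Definition vertex_overlap (K H : bgraph) (f : seq ('I_(bg_n K) * 'I_(bg_n H))) :=
  uniq (map fst f) && uniq (map snd f).

(* L (with maps fK, fH) is the quotient of K ⊔ H identifying v with w
   exactly when (v,w) ∈ f; edges of L are the images of the edges of K and H
   (no multiple edges). This characterizes the quotient up to isomorphism. *)
Definition is_glue (K H : bgraph) (f : seq ('I_(bg_n K) * 'I_(bg_n H)))
    (L : bgraph) (fK : 'I_(bg_n K) -> 'I_(bg_n L)) (fH : 'I_(bg_n H) -> 'I_(bg_n L)) : Prop :=
  injective fK /\ injective fH /\
  (forall x, (exists v, fK v = x) \/ (exists w, fH w = x)) /\
  (forall v w, fK v = fH w <-> (v, w) \in f) /\
  (forall x y, bg_adj x y <->
     (exists v v', [/\ bg_adj v v', fK v = x & fK v' = y]) \/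
     (exists w w', [/\ bg_adj w w', fH w = x & fH w' = y])).

Definition is_funion (K H : bgraph) (f : seq ('I_(bg_n K) * 'I_(bg_n H))) (L : bgraph) : Prop :=
  vertex_overlap f /\
  exists fK fH, @is_glue K H f L fK fH /\
    bg_in L = map fK (bg_in K) ++ map fH (bg_in H) /\
    bg_out L = map fK (bg_out K) ++ map fH (bg_out H).

Definition same_pattern (m m' : nat) (b : seq 'I_m) (c : seq 'I_m') : Prop :=
  size b = size c /\
  forall i j, (i < size b)%N -> (j < size b)%N ->
    (nth 0%N (map val b) i == nth 0%N (map val b) j) =
    (nth 0%N (map val c) i == nth 0%N (map val c) j).

Definition is_comp (H K L : bgraph) : Prop :=
  same_pattern (bg_out K) (bg_in H) /\
  exists fK fH, @is_glue K H (zip (bg_out K) (bg_in H)) L fK fH /\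
    bg_in L = map fK (bg_in K) /\ bg_out L = map fH (bg_out H).

(* A skew graph category, as an isomorphism-closed set of (representatives of)
   bilabelled graphs. *)
Definition skew_graph_category (C : bgraph -> Prop) : Prop :=
  (forall K, C K -> symmetric (@bg_adj K)) /\
  (forall K L, bg_iso K L -> C K -> C L) /\
  C bgN0 /\ C bgM1 /\ C bgM2 /\
  (forall K H f L, C K -> C H -> @is_funion K H f L -> C L) /\
  (forall K, C K -> C (bg_swap K)) /\
  (forall H K L, C H -> C K -> is_comp H K L -> C L).

Section Hom.
Variables (F : nzRingType) (n : nat) (adjG : rel 'I_n).

Definition is_hom (K : bgraph) (phi : {ffun 'I_(bg_n K) -> 'I_n}) : bool :=
  [forall x, forall y, bg_adj x y ==> adjG (phi x) (phi y)].

Definition homT (K : bgraph) (j i : seq 'I_n) : F :=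
  (#|[set phi : {ffun 'I_(bg_n K) -> 'I_n} |
       [&& injectiveb phi, is_hom phi,
           map phi (bg_in K) == i & map phi (bg_out K) == j]]|)%:R.

Definition in_graph_span (C : bgraph -> Prop) (k l : nat)
    (T : l.-tuple 'I_n -> k.-tuple 'I_n -> F) : Prop :=
  exists (m : nat) (c : 'I_m -> F) (Ks : 'I_m -> bgraph),
    (forall t, [/\ C (Ks t), size (bg_in (Ks t)) = k & size (bg_out (Ks t)) = l]) /\
    (forall j i, T j i = \sum_(t < m) c t * homT (Ks t) j i).
End Hom.

Definition autb (n : nat) (adjG : rel 'I_n) (s : {perm 'I_n}) : bool :=
  [forall x, forall y, adjG (s x) (s y) == adjG x y].

(* Z_2^{*n} is modelled by reduced words over 'I_n (no two equal adjacent
   letters); [red] is free reduction using the relations v^2 = e. *)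
Definition push (n : nat) (a : 'I_n) (w : seq 'I_n) : seq 'I_n :=
  if w is b :: w' then (if a == b then w' else a :: w) else [:: a].
Definition red (n : nat) (w : seq 'I_n) : seq 'I_n := foldr (@push n) [::] w.

(* A is an Aut G-invariant normal subgroup of Z_2^{*n}
   (product = reduced concatenation, inverse = reversal, automorphisms act by
   permuting letters). *)
Definition aut_inv_normal_subgroup (n : nat) (adjG : rel 'I_n) (A : pred (seq 'I_n)) : Prop :=
  (forall x, A x -> red x = x) /\
  A [::] /\
  (forall x y, A x -> A y -> A (red (x ++ y))) /\
  (forall x, A x -> A (rev x)) /\
  (forall g x, red g = g -> A x -> A (red (rev g ++ x ++ g))) /\
  (forall s : {perm 'I_n}, autb adjG s -> forall x, A x -> A (map s x)).

Definition gequiv (n : nat) (A : pred (seq 'I_n)) (p q : seq 'I_n) : bool :=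
  A (red (p ++ rev q)).

Section Alg.
Variables (Cx : nzRingType) (n : nat).

(* An element is a finite sum of pure tensors  c * (gamma_p ⊗ f),
   with p a word (representing an element of Gamma) and f a function on
   permutations (only its restriction to Aut G matters). *)
Definition Oelt := seq (Cx * seq 'I_n * ({perm 'I_n} -> Cx)).

(* Faithful evaluation: the element sum c * gamma_p ⊗ f is sent to the
   function (s, w) |-> sum c * [w ~ p] * f s on Aut G × words; this is
   injective on C Gamma ⊗ O(Aut G) (indicators of distinct classes are
   linearly independent). *)
Definition oev (A : pred (seq 'I_n)) (x : Oelt) (s : {perm 'I_n}) (w : seq 'I_n) : Cx :=
  \sum_(t <- x) t.1.1 * (if gequiv A w t.1.2 then 1 else 0) * t.2 s.

Definition omul (x y : Oelt) : Oelt :=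
  [seq ((t.1.1 * t'.1.1, t.1.2 ++ t'.1.2), fun s => t.2 s * t'.2 s) | t <- x, t' <- y].
Definition oone : Oelt := [:: (1, [::], fun _ => 1)].
Definition oscale (c : Cx) (x : Oelt) : Oelt := [seq (c * t.1.1, t.1.2, t.2) | t <- x].

Definition uent (i j : 'I_n) : Oelt :=
  [:: (1, [:: i], fun s : {perm 'I_n} => if i == s j then 1 else 0)].

Definition utens (p i : seq 'I_n) : Oelt :=
  foldr omul oone [seq uent x.1 x.2 | x <- zip p i].

Definition is_mor (A : pred (seq 'I_n)) (adjG : rel 'I_n) (k l : nat)
    (T : l.-tuple 'I_n -> k.-tuple 'I_n -> Cx) : Prop :=
  forall (j : l.-tuple 'I_n) (i : k.-tuple 'I_n) (s : {perm 'I_n}) (w : seq 'I_n),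
    autb adjG s ->
    oev A (flatten [seq oscale (T j p) (utens p i) | p <- enum {: k.-tuple 'I_n}]) s w =
    oev A (flatten [seq oscale (T q i) (utens j q) | q <- enum {: l.-tuple 'I_n}]) s w.
End Alg.

From HB Require Import structures.
From mathcomp Require Import all_boot all_order all_algebra.
From mathcomp Require Import fingroup perm.
From mathcomp Require Import complex reals.
Local Open Scope ring_scope.

Import Order.TTheory GRing.Theory Num.Theory.
Set Implicit Arguments. Unset Strict Implicit.

(* Take for C the bilabelled graphs K all of whose injective homomorphisms
   phi : K -> G send the output and input tuples to words with the same image
   in Gamma.  Since "same image in Gamma" is an equivalence relation that is a
   congruence for concatenation and is preserved by Aut G, C contains the
   generators and is closed under f-unions, involution and composition.
   Evaluating T u^{(x)k} = u^{(x)l} T shows that T is an intertwiner iff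
   T_{ji} vanishes unless gamma_j = gamma_i and T is Aut G-invariant.  Every
   hat T^G_K with K in C has both properties; conversely, since the injective
   homomorphisms G -> G are exactly the automorphisms, such a T equals
   |Aut G|^-1 sum_{(j,i)} T_{ji} hat T^G_{(G,i,j)}. *)

Section FreeReduction.
Variable n : nat.
Implicit Types (u v w x y z : seq 'I_n) (a : 'I_n).

Definition reduced w := sorted (fun a b : 'I_n => a != b) w.

Lemma reduced_push a w : reduced w -> reduced (push a w).
Proof.
case: w => [|b w] //=; case: eqP => [_ /path_sorted //|/eqP ab rw].
by rewrite /reduced /= ab.
Qed.

Lemma reduced_foldr_push x z : reduced z -> reduced (foldr (@push n) z x).
Proof. by move=> rz; elim: x => [|a x IH] //=; apply: reduced_push. Qed.

Lemma reduced_red w : reduced (red w).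
Proof. exact: reduced_foldr_push. Qed.

Lemma reduced_rev w : reduced w -> reduced (rev w).
Proof.
by rewrite /reduced rev_sorted; apply: sub_sorted => a b; rewrite eq_sym.
Qed.

Lemma pushK a w : reduced w -> push a (push a w) = w.
Proof.
case: w => [|b w] /=; first by rewrite eqxx.
case: eqP => [<-|/eqP ab _]; last by rewrite /= eqxx.
by case: w => [|c w] //= /andP[/negbTE ->].
Qed.

Lemma red_id w : reduced w -> red w = w.
Proof.
elim: w => [|a w IH] // raw; rewrite /= IH; last exact: path_sorted raw.
by case: w raw {IH} => [|b w] //= /andP[/negbTE ->].
Qed.

Lemma red_idem w : red (red w) = red w.
Proof. exact/red_id/reduced_red. Qed.

Lemma foldr_push_red x z : reduced z -> foldr (@push n) z (red x) = foldr (@push n) z x.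
Proof.
move=> rz; elim: x => [|a x IH] //=; rewrite -IH.
have rr := reduced_red x.
case: (red x) rr => [|b r] //= rr; case: eqP => [<-|_] //=.
by rewrite pushK //; exact: reduced_foldr_push.
Qed.

Lemma red_cat x y : red (x ++ y) = foldr (@push n) (red y) x.
Proof. exact: foldr_cat. Qed.

Lemma redL x y : red (red x ++ y) = red (x ++ y).
Proof. by rewrite !red_cat foldr_push_red // reduced_red. Qed.

Lemma redR x y : red (x ++ red y) = red (x ++ y).
Proof. by rewrite !red_cat red_idem. Qed.

Lemma redM u v w : red (u ++ red v ++ w) = red (u ++ v ++ w).
Proof. by rewrite -redR redL redR. Qed.

Lemma red_cancel x : red (x ++ rev x) = [::].
Proof.
elim: x => [|a x IH] //=.
by rewrite rev_cons -cats1 catA -redL IH /= eqxx.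
Qed.

Lemma red_cancel_in u x w : red (u ++ rev x ++ x ++ w) = red (u ++ w).
Proof. by rewrite [rev x ++ _]catA -(redM u) -{2}[x]revK red_cancel. Qed.

Lemma red_rev x : red (rev x) = rev (red x).
Proof.
rewrite -[RHS]red_id ?reduced_rev ?reduced_red //.
have := red_cancel_in [::] x (rev (red x)); rewrite !cat0s => <-.
by rewrite -redM -(redR (rev x)) red_cancel cats0.
Qed.

Lemma map_push (s : 'I_n -> 'I_n) a w : injective s ->
  map s (push a w) = push (s a) (map s w).
Proof. by move=> s_inj; case: w => [|b w] //=; rewrite (inj_eq s_inj); case: eqP. Qed.

Lemma map_red (s : 'I_n -> 'I_n) w : injective s -> map s (red w) = red (map s w).
Proof. by move=> s_inj; elim: w => [|a w IH] //=; rewrite map_push // IH. Qed.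

End FreeReduction.

Section Gamma.
Variables (n : nat) (adjG : rel 'I_n) (A : pred (seq 'I_n)).
Hypothesis HA : aut_inv_normal_subgroup adjG A.
Implicit Types (p q r x y g : seq 'I_n).

Lemma A_red_mul x y : A (red x) -> A (red y) -> A (red (x ++ y)).
Proof.
by case: HA => _ [_ [A_mul _]] Ax Ay; rewrite -redL -redR; apply: A_mul.
Qed.

Lemma A_red_conj g x : A (red x) -> A (red (g ++ x ++ rev g)).
Proof.
case: HA => _ [_ [_ [_ [A_conj _]]]] Ax.
have := A_conj _ _ (red_idem (rev g)) Ax.
by rewrite -red_rev revK redL redM catA redR -catA.
Qed.

Lemma gequiv_refl x : gequiv A x x.
Proof. by rewrite /gequiv red_cancel; case: HA => _ []. Qed.

Lemma gequiv_sym p q : gequiv A p q -> gequiv A q p.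
Proof.
case: HA => _ [_ [_ [A_rev _]]] /A_rev.
by rewrite /gequiv -red_rev rev_cat revK.
Qed.

Lemma gequiv_trans p q r : gequiv A p q -> gequiv A q r -> gequiv A p r.
Proof.
move=> pq qr; have := A_red_mul pq qr.
by rewrite -catA red_cancel_in.
Qed.

Lemma gequiv_cat p p' q q' :
  gequiv A p p' -> gequiv A q q' -> gequiv A (p ++ q) (p' ++ q').
Proof.
move=> pp' qq'; have := A_red_mul (A_red_conj p qq') pp'.
have := red_cancel_in (p ++ q ++ rev q') p (rev p').
by rewrite /gequiv rev_cat -!catA => ->.
Qed.

Lemma gequiv_map (s : {perm 'I_n}) p q :
  autb adjG s -> gequiv A p q -> gequiv A (map s p) (map s q).
Proof.
case: HA => _ [_ [_ [_ [_ A_aut]]]] s_aut pq.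
by rewrite /gequiv -map_rev -map_cat -map_red; [apply: A_aut | apply: perm_inj].
Qed.

End Gamma.

Section Automorphisms.
Variables (n : nat) (adjG : rel 'I_n).

Lemma autbP (s : {perm 'I_n}) :
  reflect (forall x y, adjG (s x) (s y) = adjG x y) (autb adjG s).
Proof.
apply: (iffP forallP) => [s_aut x y | s_aut x]; first exact/eqP/(forallP (s_aut x)).
by apply/forallP => y; rewrite s_aut.
Qed.

Lemma autb1 : autb adjG 1%g.
Proof. by apply/autbP => x y; rewrite !perm1. Qed.

Lemma autbV (s : {perm 'I_n}) : autb adjG s -> autb adjG s^-1%g.
Proof. by move=> /autbP s_aut; apply/autbP => x y; rewrite -s_aut !permKV. Qed.

Lemma injective_hom_reflect (phi : 'I_n -> 'I_n) : injective phi ->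
  (forall x y, adjG x y -> adjG (phi x) (phi y)) ->
  forall x y, adjG (phi x) (phi y) = adjG x y.
Proof.
move=> phi_inj phi_hom x y; apply/idP/idP; last exact: phi_hom.
pose E := [set e : 'I_n * 'I_n | adjG e.1 e.2].
pose phi2 e := (phi e.1, phi e.2).
have phi2_inj : injective phi2 by move=> [a b] [c d] [/phi_inj -> /phi_inj ->].
have phi2E : phi2 @: E = E.
  apply/eqP; rewrite eqEcard (card_imset _ phi2_inj) leqnn andbT.
  by apply/subsetP => ? /imsetP[e]; rewrite inE => /phi_hom e_adj ->; rewrite inE.
move=> xy_adj; have : (phi x, phi y) \in phi2 @: E by rewrite phi2E inE.
by case/imsetP => -[a b]; rewrite inE => ab [/phi_inj -> /phi_inj ->].
Qed.

Lemma autb_perm (phi : 'I_n -> 'I_n) (phi_inj : injective phi) :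
  (forall x y, adjG x y -> adjG (phi x) (phi y)) -> autb adjG (perm phi_inj).
Proof. by move=> phi_hom; apply/autbP => x y; rewrite !permE injective_hom_reflect. Qed.

Lemma map_tupleK k (s : {perm 'I_n}) (x : k.-tuple 'I_n) :
  map_tuple s (map_tuple s^-1%g x) = x.
Proof. by apply: val_inj; rewrite /= (mapK (permKV s)). Qed.

Lemma map_tupleVK k (s : {perm 'I_n}) (x : k.-tuple 'I_n) :
  map_tuple s^-1%g (map_tuple s x) = x.
Proof. by apply: val_inj; rewrite /= (mapK (permK s)). Qed.

Lemma map_tuple1 k (x : k.-tuple 'I_n) : map_tuple (1%g : {perm 'I_n}) x = x.
Proof. by apply: val_inj; rewrite /= map_id_in // => y _; rewrite perm1. Qed.

Lemma eq_map_tupleV k (s : {perm 'I_n}) (x y : k.-tuple 'I_n) :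
  (x == map_tuple s y) = (map_tuple s^-1%g x == y).
Proof. by apply/eqP/eqP => [->|<-]; rewrite ?map_tupleVK ?map_tupleK. Qed.

End Automorphisms.

Section Morphisms.
Variables (F : comNzRingType) (n : nat) (adjG : rel 'I_n) (A : pred (seq 'I_n)).
Hypothesis HA : aut_inv_normal_subgroup adjG A.

Lemma sum_mul_delta (I : finType) (G : I -> F) x0 :
  \sum_x G x * (if x == x0 then 1 else 0) = G x0.
Proof.
rewrite (bigD1 x0) //= eqxx mulr1 big1 ?addr0 // => x /negbTE ->.
exact: mulr0.
Qed.

Lemma utens_single (p i : seq 'I_n) : size p = size i ->
  exists f, utens F p i = [:: (1, p, f)] /\
    forall s : {perm 'I_n}, f s = if p == map s i then 1 else 0.
Proof.
elim: p i => [|a p IH] [|b i] //=; first by exists (fun=> 1).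
case=> /IH [f [fE1 fE]].
exists (fun s : {perm 'I_n} => (if a == s b then 1 else 0) * f s); split=> [|s].
  by rewrite -[utens _ _ _]/(omul (uent F a b) (utens F p i)) fE1 /omul /= mulr1.
by rewrite fE eqseq_cons; case: (a == s b); rewrite ?mul1r ?mul0r.
Qed.

Lemma oev_utens (p i : seq 'I_n) (s : {perm 'I_n}) (w : seq 'I_n) : size p = size i ->
  oev A (utens F p i) s w =
  (if gequiv A w p then 1 else 0) * (if p == map s i then 1 else 0).
Proof. by case/utens_single => f [-> fE]; rewrite /oev big_seq1 /= mul1r fE. Qed.

Lemma oev_flatten_scale (I : Type) (r : seq I) (c : I -> F) (x : I -> Oelt F n) s w :
  oev A (flatten [seq oscale (c t) (x t) | t <- r]) s w =
  \sum_(t <- r) c t * oev A (x t) s w.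
Proof.
elim: r => [|t r IH]; first by rewrite /oev !big_nil.
rewrite big_cons -IH /oev /= big_cat big_map big_distrr /=.
by congr (_ + _); apply: eq_bigr => u _; rewrite !mulrA.
Qed.

Definition gequiv_supported k l (T : l.-tuple 'I_n -> k.-tuple 'I_n -> F) :=
  forall (j : l.-tuple 'I_n) (i : k.-tuple 'I_n), T j i != 0 -> gequiv A j i.

Definition aut_invariant k l (T : l.-tuple 'I_n -> k.-tuple 'I_n -> F) :=
  forall s : {perm 'I_n}, autb adjG s ->
  forall (j : l.-tuple 'I_n) (i : k.-tuple 'I_n), T (map_tuple s j) (map_tuple s i) = T j i.

Section Entries.
Variables (k l : nat) (T : l.-tuple 'I_n -> k.-tuple 'I_n -> F).
Variables (j : l.-tuple 'I_n) (i : k.-tuple 'I_n) (s : {perm 'I_n}) (w : seq 'I_n).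

Lemma oev_mor_lhs :
  oev A (flatten [seq oscale (T j p) (utens F p i) | p <- enum {: k.-tuple 'I_n}]) s w =
  T j (map_tuple s i) * (if gequiv A w (map_tuple s i) then 1 else 0).
Proof.
pose Tw p := T j p * (if gequiv A w p then 1 else 0).
rewrite oev_flatten_scale big_enum -[RHS](sum_mul_delta Tw (map_tuple s i)).
by apply: eq_bigr => p _; rewrite oev_utens ?size_tuple // mulrA -val_eqE.
Qed.

Lemma oev_mor_rhs :
  oev A (flatten [seq oscale (T q i) (utens F j q) | q <- enum {: l.-tuple 'I_n}]) s w =
  T (map_tuple s^-1%g j) i * (if gequiv A w j then 1 else 0).
Proof.
rewrite oev_flatten_scale big_enum -(sum_mul_delta (T^~ i) (map_tuple s^-1%g j)) big_distrl.
apply: eq_bigr => q _; rewrite oev_utens ?size_tuple // -[map s q]/(val (map_tuple s q)).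
by rewrite val_eqE eq_map_tupleV eq_sym mulrA mulrAC.
Qed.

End Entries.

Lemma is_morP k l (T : l.-tuple 'I_n -> k.-tuple 'I_n -> F) :
  is_mor A adjG T <-> gequiv_supported T /\ aut_invariant T.
Proof.
have -> : is_mor A adjG T <-> forall j i s w, autb adjG s ->
    T j (map_tuple s i) * (if gequiv A w (map_tuple s i) then 1 else 0) =
    T (map_tuple s^-1%g j) i * (if gequiv A w j then 1 else 0).
  by split=> mor j i s w s_aut; have := mor j i s w s_aut; rewrite oev_mor_lhs oev_mor_rhs.
split=> [mor | [supp inv] j i s w s_aut]; first split.
- move=> j i; have := mor j i 1%g j (autb1 adjG).
  rewrite invg1 !map_tuple1 (gequiv_refl HA) mulr1.
  by case: (gequiv A j i) => //; rewrite mulr0 => <-; rewrite eqxx.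
- move=> s s_aut j i.
  have := mor (map_tuple s j) i s (map_tuple s i) s_aut.
  have := mor (map_tuple s j) i s (map_tuple s j) s_aut.
  rewrite map_tupleVK !(gequiv_refl HA) !mulr1.
  case: (boolP (gequiv A (map_tuple s j) (map_tuple s i))) => [sj_si|not_sj_si].
    by rewrite mulr1.
  have -> : gequiv A (map_tuple s i) (map_tuple s j) = false.
    by apply/negbTE; apply: contra not_sj_si => /(gequiv_sym HA).
  by rewrite !mulr0 => <- ->.
- rewrite -(inv s s_aut (map_tuple s^-1%g j) i) map_tupleK.
  have [->|/supp j_si] := eqVneq (T j (map_tuple s i)) 0; first by rewrite !mul0r.
  suff -> : gequiv A w (map_tuple s i) = gequiv A w j by [].
  apply/idP/idP => w_equiv.
    exact (gequiv_trans HA w_equiv (gequiv_sym HA j_si)).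
  exact (gequiv_trans HA w_equiv j_si).
Qed.

End Morphisms.

Section GammaGraphs.
Variables (n : nat) (adjG : rel 'I_n) (A : pred (seq 'I_n)).
Hypothesis HA : aut_inv_normal_subgroup adjG A.

Definition gamma_graph (K : bgraph) : Prop :=
  symmetric (@bg_adj K) /\
  forall phi : {ffun 'I_(bg_n K) -> 'I_n}, injectiveb phi -> is_hom adjG phi ->
    gequiv A (map phi (bg_out K)) (map phi (bg_in K)).

Lemma homP (K : bgraph) (phi : {ffun 'I_(bg_n K) -> 'I_n}) :
  reflect (forall x y, bg_adj x y -> adjG (phi x) (phi y)) (is_hom adjG phi).
Proof.
apply: (iffP forallP) => [phi_hom x y | phi_hom x].
  exact/implyP/(forallP (phi_hom x)).
by apply/forallP => y; apply/implyP/phi_hom.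
Qed.

Lemma gamma_graph_pullback (K L : bgraph) (h : 'I_(bg_n K) -> 'I_(bg_n L)) :
  injective h -> (forall x y, bg_adj x y -> bg_adj (h x) (h y)) -> gamma_graph K ->
  forall phi : {ffun 'I_(bg_n L) -> 'I_n}, injectiveb phi -> is_hom adjG phi ->
    gequiv A (map phi (map h (bg_out K))) (map phi (map h (bg_in K))).
Proof.
move=> h_inj h_hom [_ K_gamma] phi /injectiveP phi_inj /homP phi_hom.
pose psi := [ffun x => phi (h x)].
have psiE s : map psi s = map phi (map h s).
  by rewrite -map_comp; apply: eq_map => x; rewrite ffunE.
rewrite -!psiE; apply: K_gamma.
  by apply/injectiveP => x y; rewrite !ffunE => /phi_inj/h_inj.
by apply/homP => x y /h_hom/phi_hom; rewrite !ffunE.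
Qed.

Section Glue.
Variables (K H L : bgraph) (f : seq ('I_(bg_n K) * 'I_(bg_n H))).
Variables (fK : 'I_(bg_n K) -> 'I_(bg_n L)) (fH : 'I_(bg_n H) -> 'I_(bg_n L)).
Hypothesis glue : is_glue f fK fH.

Lemma glue_symmetric :
  symmetric (@bg_adj K) -> symmetric (@bg_adj H) -> symmetric (@bg_adj L).
Proof.
have [_ [_ [_ [_ adjL]]]] := glue; move=> K_sym H_sym.
suff adj_sym (x y : 'I_(bg_n L)) : bg_adj x y -> bg_adj y x.
  by move=> x y; apply/idP/idP; apply: adj_sym.
move=> /adjL[[v [v' [vv' <- <-]]] | [w [w' [ww' <- <-]]]]; apply/adjL.
  by left; exists v', v; rewrite K_sym.
by right; exists w', w; rewrite H_sym.
Qed.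

Lemma glue_homl x y : bg_adj x y -> bg_adj (fK x) (fK y).
Proof. by have [_ [_ [_ [_ adjL]]]] := glue => xy; apply/adjL; left; exists x, y. Qed.

Lemma glue_homr x y : bg_adj x y -> bg_adj (fH x) (fH y).
Proof. by have [_ [_ [_ [_ adjL]]]] := glue => xy; apply/adjL; right; exists x, y. Qed.

Lemma gamma_graph_gluel : gamma_graph K ->
  forall phi : {ffun 'I_(bg_n L) -> 'I_n}, injectiveb phi -> is_hom adjG phi ->
    gequiv A (map phi (map fK (bg_out K))) (map phi (map fK (bg_in K))).
Proof. by apply: gamma_graph_pullback glue_homl; case: glue. Qed.

Lemma gamma_graph_gluer : gamma_graph H ->
  forall phi : {ffun 'I_(bg_n L) -> 'I_n}, injectiveb phi -> is_hom adjG phi ->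
    gequiv A (map phi (map fH (bg_out H))) (map phi (map fH (bg_in H))).
Proof. by apply: gamma_graph_pullback glue_homr; case: glue => _ []. Qed.

End Glue.

Lemma gamma_graph_iso K L : bg_iso K L -> gamma_graph K -> gamma_graph L.
Proof.
move=> [h [h_bij [h_adj [h_in h_out]]]] KC; have [g hK gK] := h_bij; split.
  by move=> x y; rewrite -(gK x) -(gK y) (h_adj (g x)) (h_adj (g y)); apply: KC.1.
move=> phi phi_inj phi_hom; rewrite -h_in -h_out.
apply: gamma_graph_pullback phi_inj phi_hom => //; first exact: bij_inj.
by move=> x y; rewrite h_adj.
Qed.

Lemma gamma_graph_funion K H (f : seq ('I_(bg_n K) * 'I_(bg_n H))) L :
  gamma_graph K -> gamma_graph H -> is_funion f L -> gamma_graph L.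
Proof.
move=> KC HC [_ [fK [fH [glue [L_in L_out]]]]].
split=> [|phi phi_inj phi_hom]; first exact: glue_symmetric glue KC.1 HC.1.
rewrite L_in L_out !map_cat; apply: (gequiv_cat HA).
  exact: gamma_graph_gluel glue KC phi phi_inj phi_hom.
exact: gamma_graph_gluer glue HC phi phi_inj phi_hom.
Qed.

Lemma gamma_graph_swap K : gamma_graph K -> gamma_graph (bg_swap K).
Proof.
move=> [K_sym K_gamma]; split=> // phi phi_inj phi_hom.
exact: (gequiv_sym HA (K_gamma phi phi_inj phi_hom)).
Qed.

Lemma map_zip_eq (T1 T2 T3 : eqType) (f1 : T1 -> T3) (f2 : T2 -> T3) b c :
  size b = size c -> (forall v w, (v, w) \in zip b c -> f1 v = f2 w) ->
  map f1 b = map f2 c.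
Proof.
move=> bc f12; rewrite -[in LHS](unzip1_zip (eq_leq bc)).
rewrite -[in RHS](unzip2_zip (eq_leq (esym bc))).
by rewrite -!map_comp; apply/eq_in_map => -[v w] /f12.
Qed.

Lemma gamma_graph_comp H K L :
  gamma_graph H -> gamma_graph K -> is_comp H K L -> gamma_graph L.
Proof.
move=> HC KC [[size_KH _] [fK [fH [glue [L_in L_out]]]]].
split=> [|phi phi_inj phi_hom]; first exact: glue_symmetric glue KC.1 HC.1.
have [_ [_ [_ [identify _]]]] := glue.
have glued : map fK (bg_out K) = map fH (bg_in H).
  by apply: map_zip_eq => // v w /identify.
rewrite L_in L_out; apply: (gequiv_trans HA (gamma_graph_gluer glue HC phi_inj phi_hom)).
by rewrite -glued; apply: gamma_graph_gluel glue KC phi phi_inj phi_hom.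
Qed.

Lemma skew_graph_category_gamma : skew_graph_category gamma_graph.
Proof.
have nil_equiv : gequiv A [::] [::] by exact (gequiv_refl HA _).
split; first by move=> K [].
split; first exact: gamma_graph_iso.
split; first by split=> // phi _ _.
split; first by split=> // phi _ _; exact (gequiv_refl HA _).
split; first by split=> // phi _ _; rewrite /gequiv /= eqxx.
split; first exact: gamma_graph_funion.
split; first exact: gamma_graph_swap.
exact: gamma_graph_comp.
Qed.

End GammaGraphs.

Section HomCount.
Variables (F : nzRingType) (n : nat) (adjG : rel 'I_n).

Definition hom_set (K : bgraph) (j i : seq 'I_n) :=
  [set phi : {ffun 'I_(bg_n K) -> 'I_n} | [&& injectiveb phi, is_hom adjG phi,
     map phi (bg_in K) == i & map phi (bg_out K) == j]].

Lemma homTE K j i : homT F adjG K j i = #|hom_set K j i|%:R.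
Proof. by []. Qed.

Lemma card_hom_set_aut_le K (s : {perm 'I_n}) j i : autb adjG s ->
  (#|hom_set K j i| <= #|hom_set K (map s j) (map s i)|)%N.
Proof.
move=> /autbP s_aut.
pose s_comp (phi : {ffun 'I_(bg_n K) -> 'I_n}) := [ffun x => s (phi x)].
have s_comp_inj : injective s_comp.
  move=> phi psi /ffunP eq_s; apply/ffunP => x.
  by have := eq_s x; rewrite !ffunE => /perm_inj.
have s_compE phi r : map (s_comp phi) r = map s (map phi r).
  by rewrite -map_comp; apply: eq_map => x; rewrite ffunE.
rewrite -(card_imset _ s_comp_inj); apply/subset_leq_card/subsetP => ? /imsetP[phi].
rewrite !inE => /and4P[/injectiveP phi_inj /homP phi_hom /eqP phi_in /eqP phi_out] ->.
rewrite !s_compE phi_in phi_out !eqxx !andbT; apply/andP; split.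
  by apply/injectiveP => x y; rewrite !ffunE => /perm_inj/phi_inj.
by apply/homP => x y /phi_hom; rewrite !ffunE s_aut.
Qed.

Lemma homT_aut K (s : {perm 'I_n}) j i : autb adjG s ->
  homT F adjG K (map s j) (map s i) = homT F adjG K j i.
Proof.
move=> s_aut; rewrite !homTE; congr _%:R; apply/eqP.
rewrite eqn_leq card_hom_set_aut_le // andbT.
have := card_hom_set_aut_le K (map s j) (map s i) (autbV s_aut).
by rewrite !(mapK (permK s)).
Qed.

End HomCount.

Section Span.
Variables (F : numFieldType) (n : nat) (adjG : rel 'I_n) (A : pred (seq 'I_n)).
Hypotheses (adjG_sym : symmetric adjG) (HA : aut_inv_normal_subgroup adjG A).

Lemma homT_supported K (j i : seq 'I_n) :
  gamma_graph adjG A K -> homT F adjG K j i != 0 -> gequiv A j i.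
Proof.
move=> [_ K_gamma]; rewrite homTE pnatr_eq0 -lt0n card_gt0 => /set0Pn[phi].
by rewrite inE => /and4P[phi_inj phi_hom /eqP <- /eqP <-]; apply: K_gamma.
Qed.

Lemma span_supported_invariant k l (T : l.-tuple 'I_n -> k.-tuple 'I_n -> F) :
  in_graph_span adjG (gamma_graph adjG A) T ->
  gequiv_supported A T /\ aut_invariant adjG T.
Proof.
move=> [m [c [Ks [Ks_gamma TE]]]]; split=> [j i | s s_aut j i].
  apply: contraR => not_ji; rewrite TE big1 // => t _.
  have [/homT_supported K_gamma _ _] := Ks_gamma t.
  by rewrite (contraNeq (K_gamma _ _) not_ji) mulr0.
by rewrite !TE; apply: eq_bigr => t _; rewrite homT_aut.
Qed.

Definition G_labelled (i j : seq 'I_n) : bgraph := @BGraph n adjG i j.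

(* No injective map into G exists, so this graph lies in [gamma_graph]; it
   stands in for the pairs (j, i) on which T vanishes. *)
Definition bg_oversized k l : bgraph :=
  @BGraph n.+1 (@rel0 n.+1) (nseq k ord0) (nseq l ord0).

Lemma gamma_graph_oversized k l : gamma_graph adjG A (bg_oversized k l).
Proof. by split=> // phi /injectiveP/leq_card; rewrite !card_ord ltnn. Qed.

Lemma gamma_graph_G_labelled (i j : seq 'I_n) :
  gequiv A j i -> gamma_graph adjG A (G_labelled i j).
Proof.
move=> ji; split=> // phi /injectiveP phi_inj /homP phi_hom.
have := gequiv_map HA (autb_perm phi_inj phi_hom) ji.
by rewrite !(eq_map (permE phi_inj)).
Qed.

Definition inj_endos : {set {ffun 'I_n -> 'I_n}} :=
  [set phi : {ffun 'I_n -> 'I_n} |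
     injectiveb phi && is_hom (K := G_labelled [::] [::]) adjG phi].

Lemma homT_G_labelled (i' j' j i : seq 'I_n) :
  homT F adjG (G_labelled i' j') j i =
  \sum_(phi in inj_endos) (if (map phi i' == i) && (map phi j' == j) then 1 else 0).
Proof.
rewrite homTE (_ : hom_set adjG (G_labelled i' j') j i =
    [set phi in inj_endos | (map phi i' == i) && (map phi j' == j)]).
  by rewrite -sum1dep_card natr_sum big_mkcondr.
by apply/setP => phi; rewrite !inE andbA.
Qed.

Section Invariant.
Variables (k l : nat) (T : l.-tuple 'I_n -> k.-tuple 'I_n -> F).
Hypotheses (T_supp : gequiv_supported A T) (T_inv : aut_invariant adjG T).

Lemma sum_inj_endo_delta (j : l.-tuple 'I_n) (i : k.-tuple 'I_n) phi : phi \in inj_endos ->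
  \sum_(x : l.-tuple 'I_n * k.-tuple 'I_n)
    T x.1 x.2 * (if (map phi x.2 == i) && (map phi x.1 == j) then 1 else 0) = T j i.
Proof.
rewrite inE => /andP[/injectiveP phi_inj /homP phi_hom].
pose s := perm phi_inj; have s_aut : autb adjG s := autb_perm phi_inj phi_hom.
have phiE m (x y : m.-tuple 'I_n) : (map phi x == y) = (x == map_tuple s^-1%g y).
  rewrite -(eq_map (permE phi_inj)) -[map s x]/(val (map_tuple s x)) val_eqE.
  by rewrite eq_sym eq_map_tupleV eq_sym.
rewrite -(T_inv (autbV s_aut) j i).
rewrite -(sum_mul_delta (fun x => T x.1 x.2) (map_tuple s^-1%g j, map_tuple s^-1%g i)).
by apply: eq_bigr => -[x1 x2] _; rewrite !phiE andbC.
Qed.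

Lemma sum_homT_G_labelled (j : l.-tuple 'I_n) (i : k.-tuple 'I_n) :
  \sum_(x : l.-tuple 'I_n * k.-tuple 'I_n) T x.1 x.2 * homT F adjG (G_labelled x.2 x.1) j i =
  #|inj_endos|%:R * T j i.
Proof.
under eq_bigr do rewrite homT_G_labelled mulr_sumr.
rewrite exchange_big /= (eq_bigr _ (fun phi phi_endo => sum_inj_endo_delta j i phi_endo)).
by rewrite sumr_const mulr_natl.
Qed.

Lemma inj_endos_gt0 : (0 < #|inj_endos|)%N.
Proof.
apply/card_gt0P; exists [ffun x => x]; rewrite inE; apply/andP; split.
  by apply/injectiveP => x y; rewrite !ffunE.
by apply/homP => x y; rewrite !ffunE.
Qed.

Lemma invariant_span : in_graph_span adjG (gamma_graph adjG A) T.
Proof.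
pose P : finType := (l.-tuple 'I_n * k.-tuple 'I_n)%type.
pose e (t : 'I_#|P|) : P := enum_val t.
pose N : F := #|inj_endos|%:R.
exists #|P|, (fun t => T (e t).1 (e t).2 / N),
  (fun t => if T (e t).1 (e t).2 != 0 then G_labelled (e t).2 (e t).1 else bg_oversized k l).
split=> [t | j i].
  case: ifP => [/T_supp ji | _]; split; rewrite /= ?size_tuple ?size_nseq //.
    exact: gamma_graph_G_labelled.
  exact: gamma_graph_oversized.
pose summand (x : P) := T x.1 x.2 / N * homT F adjG (G_labelled x.2 x.1) j i.
rewrite (eq_bigr (summand \o e)).
  rewrite -(big_enum_val summand) /summand.
  under eq_bigr do rewrite mulrAC.
  rewrite -mulr_suml sum_homT_G_labelled mulrAC mulfV ?mul1r //.
  by rewrite pnatr_eq0 -lt0n inj_endos_gt0.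
by move=> t _; rewrite /summand /=; case: ifP => // /negbFE/eqP ->; rewrite !mul0r.
Qed.

End Invariant.

End Span.

Theorem proposition5p1 (R : realType) (n : nat) (adjG : rel 'I_n)
    (adjG_sym : symmetric adjG) (A : pred (seq 'I_n))
    (HA : aut_inv_normal_subgroup adjG A) :
  exists C : bgraph -> Prop,
    skew_graph_category C /\
    forall (k l : nat) (T : l.-tuple 'I_n -> k.-tuple 'I_n -> R[i]),
      in_graph_span adjG C T <-> is_mor A adjG T.
Proof.
exists (gamma_graph adjG A); split; first exact: skew_graph_category_gamma.
move=> k l T; rewrite is_morP //; split; first exact: span_supported_invariant.
by case; apply: invariant_span.
Qed.
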